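(* Let $\mathcal{H}$ be an instance of $r$-Hypergraph Label Cover ($r\geq 2$), let $\mathcal{S}$ be an $(r,|C|,2)$-vector system, and let $G$ be the graph with vector costs obtained from $\mathcal{H}$ and $\mathcal{S}$ by the basic reduction (with $p=2$). (a) If some assignment satisfies all hyperedges of $\mathcal{H}$, then $G$ has an $s$-$t$ path $P$ with $\|\mathrm{cost}(P)\|_2^2=1$. (b) If every assignment weakly satisfies at most an $\varepsilon$-fraction of the hyperedges, then every $s$-$t$ path $P$ in $G$ satisfies $\|\mathrm{cost}(P)\|_2^2\geq 2-(1/r+2\varepsilon)$. (Norms are the scaled norms defined below.)
   Context: $r$-Hypergraph Label Cover: an $r$-partite hypergraph $\mathcal{H}=(V,\mathcal{E})$, $V=V_1\cup\dots\cup V_r$, each hyperedge containing exactly one vertex of each $V_j$; label set $L$; color set $C$; maps $\pi_h^u:L\to C$ for $h\in\mathcal{E}$, $u\in h$. For an assignment $\sigma:V\to L$, the color of $u$ in $h$ is $\pi_h^u(\sigma(u))$; $\sigma$ satisfies $h$ if all vertices of $h$ have the same color in $h$, and weakly satisfies $h$ if two distinct vertices of $h$ have the same color in $h$. Multilinear product: $\langle u_1,\dots,u_p\rangle=\sum_j\prod_i u_i(j)$. An $(r,q,p)$-vector system is a collection $\{v_j^c: j\in[r], c\in[q]\}$ of $rq$ distinct vectors in $\mathbb{R}^{d_0}$ (color of $v_j^c$ is $c$) such that for any $u_1,\dots,u_p$ from it (repetitions allowed), $\langle u_1,\dots,u_p\rangle=0$ if two distinct vectors in the list share a color, and otherwise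 $\langle u_1,\dots,u_p\rangle=r^{-t}$ with $t$ the number of distinct vectors in the list. Here colors are identified with $C$. Basic reduction: let $m=|\mathcal{E}|$ and $\mathcal{S}=\{v_j^c\}$ an $(r,|C|,p)$-vector system in $\mathbb{R}^{d_0}$. For each $u\in V$ create a block of $|L|$ parallel edges $e(u,l)$, $l\in L$, and compose all blocks in series (in arbitrary order) between $s$ and $t$; $s$-$t$ paths correspond bijectively to assignments via $P_\sigma=\{e(u,\sigma(u)):u\in V\}$. Costs lie in $\mathbb{R}^{d_0m}=\bigoplus_{h\in\mathcal{E}}\mathbb{R}^{d_0}$: $c(e(u,l))=\bigoplus_h c^h(e(u,l))$ with $c^h(e(u,l))=v_j^{\pi_h^u(l)}$ if $u\in h$ and $u\in V_j$, and $c^h(e(u,l))=0$ if $u\notin h$. $\mathrm{cost}(P)=\sum_{e\in P}c(e)$. On $\mathbb{R}^{d_0m}$ we use the scaled norm $\|x\|_p^p=\frac{1}{m}\sum_i|x_i|^p$. *)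

From HB Require Import structures.
From mathcomp Require Import all_boot all_order all_algebra.
From mathcomp Require Import reals.
Set Implicit Arguments. Unset Strict Implicit. Unset Printing Implicit Defensive.
Import Order.TTheory GRing.Theory Num.Theory.
Local Open Scope ring_scope.

(* Vertices V are partitioned into
   V_0,...,V_{r-1} by [lc_part]; each hyperedge h (elements of the finite type
   lc_E) contains exactly one vertex of each part, namely [lc_edge h j] in V_j.
   The projection pi_h^u for u = lc_edge h j is [lc_pi h j]. *)
Record HLC (r : nat) := {
  lc_V : finType;
  lc_L : finType;
  lc_C : finType;
  lc_E : finType;
  lc_part : lc_V -> 'I_r;
  lc_edge : lc_E -> 'I_r -> lc_V;
  lc_edge_part : forall h j, lc_part (lc_edge h j) = j;
  lc_pi : lc_E -> 'I_r -> lc_L -> lc_C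
}.

Section LC.
Variables (r : nat) (H : HLC r).

Definition assignment := lc_V H -> lc_L H.

Definition color (s : assignment) (h : lc_E H) (j : 'I_r) : lc_C H :=
  lc_pi h j (s (lc_edge h j)).

Definition satisfies (s : assignment) (h : lc_E H) : bool :=
  [forall j, forall j', color s h j == color s h j'].

(* two distinct vertices of h (= two distinct positions, as they lie in
   different parts) have the same color *)
Definition weakly_satisfies (s : assignment) (h : lc_E H) : bool :=
  [exists j, exists j', (j != j') && (color s h j == color s h j')].
End LC.

Section VS.
Variable R : realType.

Definition mlprod (d p : nat) (u : 'I_p -> {ffun 'I_d -> R}) : R :=
  \sum_(j < d) \prod_(i < p) u i j.

Definition vector_system (r : nat) (C : finType) (d0 p : nat)
    (v : 'I_r -> C -> {ffun 'I_d0 -> R}) : Prop :=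
  injective (fun x : 'I_r * C => v x.1 x.2) /\
  forall s : 'I_p -> 'I_r * C,
    let u := fun i => v (s i).1 (s i).2 in
    mlprod u =
      if [exists i, exists i', (u i != u i') && ((s i).2 == (s i').2)]
      then 0
      else (r%:R : R) ^- (size (undup [seq u i | i <- enum 'I_p])).

Variables (r : nat) (H : HLC r) (d0 : nat)
          (v : 'I_r -> lc_C H -> {ffun 'I_d0 -> R}).

(* Edges of G: e(u,l) is the pair (u,l).  G is the series composition of the
   parallel blocks {e(u,l) : l in L}, u in V; hence an s-t path is exactly an
   edge set containing exactly one edge of every block. *)
Definition is_st_path (P : {set lc_V H * lc_L H}) : Prop :=
  forall u : lc_V H, #|[set l | (u, l) \in P]| = 1%N.

(* cost vector in R^{d0 m} = (+)_h R^{d0}, represented as E -> 'I_d0 -> R *)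
Definition edge_cost (e : lc_V H * lc_L H) (h : lc_E H) (i : 'I_d0) : R :=
  let u := e.1 in
  if lc_edge h (lc_part u) == u
  then v (lc_part u) (lc_pi h (lc_part u) e.2) i
  else 0.

Definition path_cost (P : {set lc_V H * lc_L H}) (h : lc_E H) (i : 'I_d0) : R :=
  \sum_(e in P) edge_cost e h i.

Definition scaled_normp_pow (p : nat) (x : lc_E H -> 'I_d0 -> R) : R :=
  (#|lc_E H|%:R)^-1 * \sum_(h : lc_E H) \sum_(i < d0) `|x h i| ^+ p.
End VS.

(* An s-t path is an assignment sg, and the block of its cost at a hyperedge h
   is sum_j v_j^{c_j}, where c_j is the color of the j-th vertex of h.  For
   p = 2 the vector-system identities give the squared norm of this block as
   1 + r^-2 #{(j, k) | c_j != c_k}: it is 1 when h is satisfied, always at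
   least 1, and 2 - 1/r when no two vertices of h share a color.  Averaging
   over the hyperedges, the weakly satisfied ones (at most an eps-fraction)
   cost at most 1 each below 2 - 1/r, which even yields 2 - 1/r - eps. *)

From HB Require Import structures.
From mathcomp Require Import all_boot all_order all_algebra.
From mathcomp Require Import reals ring lra.
Set Implicit Arguments.
Unset Strict Implicit.
Unset Printing Implicit Defensive.
Import Order.TTheory GRing.Theory Num.Theory.
Local Open Scope ring_scope.

Section VectorSystem.
Variables (R : realType) (r : nat) (C : finType) (d0 : nat).
Variable v : 'I_r -> C -> {ffun 'I_d0 -> R}.
Hypotheses (vs : vector_system 2 v) (r_gt0 : (0 < r)%N).

Lemma vector_system_eq j a k b : (v j a == v k b) = ((j, a) == (k, b)).
Proof. by apply/eqP/eqP => [/(vs.1 (j, a) (k, b))|[-> ->]]. Qed.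

Lemma vector_system_dot j a k b :
  \sum_(x < d0) v j a x * v k b x =
  if (j, a) == (k, b) then r%:R^-1 else if a == b then 0 else r%:R ^- 2.
Proof.
pose s (i : 'I_2) := if i == ord0 then (j, a) else (k, b).
have := vs.2 s; rewrite /mlprod.
under eq_bigr => x _ do rewrite !big_ord_recl big_ord0 mulr1.
rewrite /= enum_ordSl enum_ordSl enum_ord0 /s /= mem_seq1 vector_system_eq.
have -> : [exists i, exists i', (v (s i).1 (s i).2 != v (s i').1 (s i').2) &&
                                ((s i).2 == (s i').2)]
          = ((j, a) != (k, b)) && (a == b).
  apply/existsP/andP => [[i /existsP[i']]|[ne_ja_kb eq_ab]].
    rewrite /s; case: ifP; case: ifP; rewrite vector_system_eq ?eqxx //= => _ _.
      by move/andP.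
    by rewrite [(k, b) == _]eq_sym [b == _]eq_sym => /andP.
  exists ord0; apply/existsP; exists (lift ord0 ord0).
  by rewrite /s /= vector_system_eq ne_ja_kb eq_ab.
by have [_|_] := eqVneq (j, a) (k, b); last case: eqVneq.
Qed.

Lemma vector_system_sqnorm (c : 'I_r -> C) :
  \sum_(x < d0) (\sum_(j < r) v j (c j) x) ^+ 2 =
  1 + r%:R ^- 2 * \sum_(j < r) \sum_(k < r) (c j != c k)%:R.
Proof.
have dot j k : \sum_(x < d0) v j (c j) x * v k (c k) x =
               (if k == j then r%:R^-1 else 0) + r%:R ^- 2 * (c j != c k)%:R.
  rewrite vector_system_dot xpair_eqE.
  have [->|_] /= := eqVneq j k; first by rewrite eqxx mulr0 addr0.
  by rewrite add0r; case: eqVneq; rewrite ?mulr0 ?mulr1.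
under eq_bigr => x _ do rewrite expr2 mulr_suml.
under eq_bigr => x _ do under eq_bigr => j _ do rewrite mulr_sumr.
rewrite exchange_big /=.
under eq_bigr => j _ do rewrite exchange_big (eq_bigr _ (fun k _ => dot j k)) big_split /=
  -big_mkcond big_pred1_eq.
rewrite big_split /= sumr_const card_ord -[_ *+ r]mulr_natr mulVf ?pnatr_eq0 -?lt0n //.
by rewrite mulr_sumr; congr (_ + _); apply: eq_bigr => j _; rewrite mulr_sumr.
Qed.

Lemma vector_system_sqnorm_ge1 (c : 'I_r -> C) :
  1 <= \sum_(x < d0) (\sum_(j < r) v j (c j) x) ^+ 2.
Proof.
rewrite vector_system_sqnorm lerDl mulr_ge0 ?invr_ge0 ?exprn_ge0 ?ler0n //.
by apply: sumr_ge0 => j _; apply: sumr_ge0 => k _; apply: ler0n.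
Qed.

Lemma vector_system_sqnorm_const (c : 'I_r -> C) :
  (forall j k, c j = c k) -> \sum_(x < d0) (\sum_(j < r) v j (c j) x) ^+ 2 = 1.
Proof.
move=> c_const; rewrite vector_system_sqnorm big1 ?mulr0 ?addr0 // => j _.
by rewrite big1 // => k _; rewrite (c_const j k) eqxx.
Qed.

Lemma vector_system_sqnorm_inj (c : 'I_r -> C) :
  injective c -> \sum_(x < d0) (\sum_(j < r) v j (c j) x) ^+ 2 = 2 - r%:R^-1.
Proof.
move=> c_inj; rewrite vector_system_sqnorm.
have row j : \sum_(k < r) (c j != c k)%:R = r%:R - 1 :> R.
  rewrite (eq_bigr (fun k => 1 - (k == j)%:R)); last first.
    by move=> k _; rewrite (inj_eq c_inj) eq_sym; case: eqP; rewrite ?subrr ?subr0.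
  rewrite sumrB sumr_const card_ord (bigD1 j) //= eqxx big1 ?addr0 //.
  by move=> k /negbTE ->.
rewrite (eq_bigr _ (fun j _ => row j)) sumr_const card_ord -mulr_natl.
by field; rewrite pnatr_eq0 -lt0n.
Qed.
End VectorSystem.

Section BasicReduction.
Variables (R : realType) (r : nat) (H : HLC r) (d0 : nat).
Variable v : 'I_r -> lc_C H -> {ffun 'I_d0 -> R}.

Definition path_of (sg : assignment H) : {set lc_V H * lc_L H} :=
  [set (u, sg u) | u : lc_V H].

Lemma mem_path_of (sg : assignment H) u l : ((u, l) \in path_of sg) = (l == sg u).
Proof. by apply/imsetP/eqP => [[u' _ [-> ->]] // | ->]; exists u. Qed.

Lemma path_of_st_path (sg : assignment H) : is_st_path (path_of sg).
Proof.
move=> u; rewrite -(cards1 (sg u)); apply: eq_card => l.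
by rewrite !inE mem_path_of.
Qed.

Lemma st_path_path_of P : is_st_path P -> exists sg, P = path_of sg.
Proof.
move=> P_st; have [sg sgP] : exists sg : assignment H,
    forall u, [set l | (u, l) \in P] = [set sg u].
  apply: (@fin_all_exists _ (fun=> lc_L H)
            (fun u l => [set l0 | (u, l0) \in P] = [set l])) => u.
  by apply/cards1P; rewrite P_st.
exists sg; apply/setP => -[u l].
by rewrite mem_path_of -in_set1 -sgP inE.
Qed.

Lemma path_cost_path_of (sg : assignment H) h i :
  path_cost v (path_of sg) h i = \sum_(j < r) v j (color sg h j) i.
Proof.
rewrite /path_cost big_imset /=; last by move=> u w _ _ [].
rewrite /edge_cost /= -big_mkcond /=.
rewrite (reindex_onto (lc_edge h) (@lc_part _ H)) /=; last by move=> u /eqP.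
apply: eq_big => j; first by rewrite lc_edge_part !eqxx.
by rewrite /color lc_edge_part.
Qed.

Lemma satisfies_color_const (sg : assignment H) (h : lc_E H) :
  satisfies sg h -> forall j k, color sg h j = color sg h k.
Proof. by move=> /forallP sat j k; apply/eqP; move/forallP: (sat j). Qed.

Lemma weakly_satisfiesN_color_inj (sg : assignment H) (h : lc_E H) :
  ~~ weakly_satisfies sg h -> injective (color sg h).
Proof.
move=> not_weak j k eq_jk; apply/eqP; apply: contraNT not_weak => ne_jk.
by apply/existsP; exists j; apply/existsP; exists k; rewrite ne_jk eq_jk /=.
Qed.

Lemma scaled_sqnorm_path_of (sg : assignment H) :
  scaled_normp_pow 2 (path_cost v (path_of sg)) = #|lc_E H|%:R^-1 *
    \sum_(h : lc_E H) \sum_(x < d0) (\sum_(j < r) v j (color sg h j) x) ^+ 2.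
Proof.
congr (_ * _); apply: eq_bigr => h _; apply: eq_bigr => x _.
by rewrite path_cost_path_of real_normK ?num_real.
Qed.

Hypotheses (vs : vector_system 2 v) (r_gt0 : (0 < r)%N).

Lemma hyperedge_sqnorm_lb (sg : assignment H) (h : lc_E H) :
  2 - r%:R^-1 - (weakly_satisfies sg h)%:R <=
  \sum_(x < d0) (\sum_(j < r) v j (color sg h j) x) ^+ 2.
Proof.
have [_|/weakly_satisfiesN_color_inj c_inj] := boolP (weakly_satisfies sg h).
  rewrite /= mulr1n.
  have := vector_system_sqnorm_ge1 vs r_gt0 (color sg h).
  have : 0 <= r%:R^-1 :> R by rewrite invr_ge0 ler0n.
  lra.
by rewrite (vector_system_sqnorm_inj vs r_gt0 c_inj) subr0.
Qed.
End BasicReduction.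

Theorem lemma4p1 (R : realType) (r : nat) (H : HLC r) (d0 : nat)
    (v : 'I_r -> lc_C H -> {ffun 'I_d0 -> R}) :
  (2 <= r)%N -> (0 < #|lc_E H|)%N ->
  @vector_system R r (lc_C H) d0 2 v ->
  ((exists s : assignment H, forall h, satisfies s h) ->
     exists P, is_st_path P /\ scaled_normp_pow 2 (path_cost v P) = 1)
  /\
  (forall eps : R,
     (forall s : assignment H,
        #|[set h | weakly_satisfies s h]|%:R <= eps * #|lc_E H|%:R) ->
     forall P, is_st_path P ->
       2 - ((r%:R)^-1 + 2 * eps) <= scaled_normp_pow 2 (path_cost v P)).
Proof.
move=> r_ge2 E_gt0 vs; have r_gt0 : (0 < r)%N by apply: leq_trans r_ge2.
have m_gt0 : 0 < #|lc_E H|%:R :> R by rewrite ltr0n.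
split=> [[sg sat] | eps weak_le P /st_path_path_of[sg ->]].
  exists (path_of sg); split; first exact: path_of_st_path.
  rewrite scaled_sqnorm_path_of (eq_bigr (fun=> 1)); last first.
    by move=> h _; apply/(vector_system_sqnorm_const vs r_gt0)/satisfies_color_const.
  by rewrite sumr_const mulVf ?gt_eqF.
rewrite scaled_sqnorm_path_of.
pose W : R := #|[set h | weakly_satisfies sg h]|%:R.
have W_sum : W = \sum_(h : lc_E H) (weakly_satisfies sg h)%:R.
  by rewrite /W -sumr_const big_mkcond; apply: eq_bigr => h _; rewrite inE; case: ifP.
have S_lb : #|lc_E H|%:R * (2 - r%:R^-1) - W <=
            \sum_(h : lc_E H) \sum_(x < d0) (\sum_(j < r) v j (color sg h j) x) ^+ 2.
  rewrite W_sum mulr_natl -sumr_const -sumrB; apply: ler_sum => h _.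
  exact: hyperedge_sqnorm_lb.
have W_le : W <= eps * #|lc_E H|%:R := weak_le sg.
have W_ge0 : 0 <= W by rewrite ler0n.
rewrite -(ler_pM2l m_gt0) mulrA mulfV ?gt_eqF // mul1r.
lra.
Qed.
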